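(* Let $A=(A_1,\dots,A_d)$ be a random vector with values in $\{0,1\}^d$ whose joint distribution is generated by a linear triangular system, namely $\Pr(A_1=a_1)=\tfrac12$ for $a_1\in\{0,1\}$ and, for each $s=2,\dots,d$ and all $(a_1,\dots,a_s)\in\{0,1\}^s$, $$\Pr(A_s=a_s\mid A_1=a_1,\dots,A_{s-1}=a_{s-1})=\tfrac12\Big(1+\sum_{j=1}^{s-1}\beta_{sj}(-1)^{a_s+a_j}\Big)$$ for real coefficients $\beta_{sj}$ (such that these are valid conditional probabilities), the joint distribution being $\Pr(A=a)=\Pr(A_1=a_1)\prod_{s=2}^d\Pr(A_s=a_s\mid A_1=a_1,\dots,A_{s-1}=a_{s-1})$. Then the distribution of $A$ is palindromic, i.e. $\Pr(A=a)=\Pr(A=\sim a)$ for all $a\in\{0,1\}^d$.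
   Context: $\sim a$ denotes the complement of the binary vector $a$, i.e. $(\sim a)_v=1-a_v$. *)

From HB Require Import structures.
From mathcomp Require Import all_boot all_order all_algebra.
Set Implicit Arguments. Unset Strict Implicit. Unset Printing Implicit Defensive.
Import Order.TTheory GRing.Theory Num.Theory.
Local Open Scope ring_scope.

(* Linear triangular system on {0,1}^d; coordinates indexed by 'I_d
   (index s : 'I_d corresponds to A_{s+1} of the paper); bits as bool. *)

Definition cond_prob (R : realFieldType) (d : nat) (beta : 'I_d -> 'I_d -> R)
    (s : 'I_d) (a : 'I_d -> bool) : R :=
  if (val s == 0)%N then 2^-1
  else 2^-1 * (1 + \sum_(j < d | (j < s)%N) beta s j * (-1) ^+ (a s + a j)%N).

Definition joint_prob (R : realFieldType) (d : nat) (beta : 'I_d -> 'I_d -> R)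
    (a : 'I_d -> bool) : R :=
  \prod_(s < d) cond_prob beta s a.

Definition compl_vec (d : nat) (a : 'I_d -> bool) : 'I_d -> bool :=
  fun v => ~~ a v.

From HB Require Import structures.
From mathcomp Require Import all_boot all_order all_algebra.
Import Order.TTheory GRing.Theory Num.Theory.
Local Open Scope ring_scope.

(* Each conditional factor sees a only through the signs (-1)^(a_s + a_j), and
   flipping both bits changes a_s + a_j by 0 or 2, so every factor is invariant
   under complementation. *)

Lemma signr_addbN (R : ringType) (x y : bool) :
  (-1 : R) ^+ (~~ x + ~~ y)%N = (-1) ^+ (x + y)%N.
Proof. by case: x; case: y; rewrite /= ?expr0 // sqrrN expr1n. Qed.

Lemma cond_prob_compl (R : realFieldType) (d : nat) (beta : 'I_d -> 'I_d -> R)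
    (s : 'I_d) (a : 'I_d -> bool) :
  cond_prob beta s (compl_vec a) = cond_prob beta s a.
Proof.
rewrite /cond_prob; case: ifP => // _.
by congr (_ * (1 + _)); apply: eq_bigr => j _; rewrite signr_addbN.
Qed.

Theorem proposition2p4 (R : realFieldType) (d : nat) (beta : 'I_d -> 'I_d -> R) :
  (0 < d)%N ->
  (forall (s : 'I_d) (a : 'I_d -> bool),
      0 <= cond_prob beta s a /\ cond_prob beta s a <= 1) ->
  forall a : 'I_d -> bool,
    joint_prob beta a = joint_prob beta (compl_vec a).
Proof.
move=> _ _ a; rewrite /joint_prob.
by apply: eq_bigr => s _; rewrite cond_prob_compl.
Qed.
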